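(* Let $T$ be a left V-ring. Then either $T$ has a maximal subring or $T$ is a duo ring. In particular, if $T$ is a left V-ring with no maximal subring, then $T$ is also a right V-ring.
   Context: All rings are associative with identity $1\neq0$; subrings contain the identity. A maximal subring of $T$ is a proper subring with no subring strictly between it and $T$. A ring $T$ is a left (resp. right) V-ring if every simple left (resp. right) $T$-module is injective. A ring is duo if every left ideal and every right ideal is two-sided. *)

(* Left T-modules are MathComp's lmodType T (scalar ring may be
   noncommutative); right T-modules are left modules over the converse ring T^c. *)
From HB Require Import structures.
From mathcomp Require Import all_boot all_order all_algebra.
Set Implicit Arguments. Unset Strict Implicit. Unset Printing Implicit Defensive.
Import GRing.Theory.
Local Open Scope ring_scope.

Definition is_subring (T : nzRingType) (S : T -> Prop) : Prop :=
  S 1 /\ (forall x y, S x -> S y -> S (x - y)) /\ (forall x y, S x -> S y -> S (x * y)).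

Definition maximal_subring (T : nzRingType) (S : T -> Prop) : Prop :=
  [/\ is_subring S,
      (exists x, ~ S x) &
      forall S' : T -> Prop, is_subring S' -> (forall x, S x -> S' x) ->
        (forall x, S' x <-> S x) \/ (forall x, S' x)].

Definition has_maximal_subring (T : nzRingType) : Prop :=
  exists S : T -> Prop, maximal_subring S.

Definition additive_subgroup (T : nzRingType) (I : T -> Prop) : Prop :=
  I 0 /\ forall x y, I x -> I y -> I (x - y).

Definition left_ideal (T : nzRingType) (I : T -> Prop) : Prop :=
  additive_subgroup I /\ forall r x, I x -> I (r * x).

Definition right_ideal (T : nzRingType) (I : T -> Prop) : Prop :=
  additive_subgroup I /\ forall r x, I x -> I (x * r).

Definition two_sided_ideal (T : nzRingType) (I : T -> Prop) : Prop :=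
  left_ideal I /\ right_ideal I.

Definition duo_ring (T : nzRingType) : Prop :=
  (forall I : T -> Prop, left_ideal I -> two_sided_ideal I) /\
  (forall I : T -> Prop, right_ideal I -> two_sided_ideal I).

Definition submodule (R : nzRingType) (M : lmodType R) (P : M -> Prop) : Prop :=
  [/\ P 0, (forall x y, P x -> P y -> P (x + y)) & (forall (a : R) x, P x -> P (a *: x))].

Definition simple_module (R : nzRingType) (M : lmodType R) : Prop :=
  (exists m : M, m <> 0) /\
  forall P : M -> Prop, submodule P -> (forall x, P x -> x = 0) \/ (forall x, P x).

Definition injective_module (R : nzRingType) (M : lmodType R) : Prop :=
  forall (A B : lmodType R) (f : {linear A -> B}) (g : {linear A -> M}),
    injective f -> exists h : {linear B -> M}, forall a, h (f a) = g a.

Definition left_V_ring (T : nzRingType) : Prop :=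
  forall M : lmodType T, simple_module M -> injective_module M.

Definition right_V_ring (T : nzRingType) : Prop :=
  forall M : lmodType T^c, simple_module M -> injective_module M.

(* Without a maximal subring, the idealizer of the annihilator of an element of a
   simple module is the whole ring (a proper one would be a maximal subring), so
   these annihilators are two-sided ideals. For a left V-ring this forces
   [a \in R a^2] for every [a]: otherwise take [K] maximal among the left ideals
   containing [R a^2] but not [a]; the simple module [R/(K : a)] embeds into [R/K] via
   [x |-> x a], the embedding splits, and the splitting puts [a] into [K]. Strongly
   regular rings are von Neumann regular with central idempotents, hence duo. The
   same facts for the opposite ring show that every map from a right ideal into a
   simple right module is a left multiplication, so Baer's criterion applies. *)

From HB Require Import structures.
From mathcomp Require Import all_boot all_order all_algebra.
From mathcomp Require Import boolp classical_sets.
Set Implicit Arguments. Unset Strict Implicit. Unset Printing Implicit Defensive.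
Import GRing.Theory.
Local Open Scope ring_scope.

Section Closure.
Variable R : nzRingType.

Lemma left_ideal0 (K : R -> Prop) : left_ideal K -> K 0.
Proof. by case=> [[]]. Qed.

Lemma left_idealB (K : R -> Prop) x y : left_ideal K -> K x -> K y -> K (x - y).
Proof. by case=> [[_ KB] _]; apply: KB. Qed.

Lemma left_idealN (K : R -> Prop) x : left_ideal K -> K x -> K (- x).
Proof. by move=> hK Kx; rewrite -sub0r; apply: left_idealB => //; apply: left_ideal0. Qed.

Lemma left_idealD (K : R -> Prop) x y : left_ideal K -> K x -> K y -> K (x + y).
Proof. by move=> hK Kx Ky; rewrite -[y]opprK; apply: left_idealB; last apply: left_idealN. Qed.

Lemma left_idealMl (K : R -> Prop) r x : left_ideal K -> K x -> K (r * x).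
Proof. by case=> _ KM; apply: KM. Qed.

Lemma subringD (S : R -> Prop) x y : is_subring S -> S x -> S y -> S (x + y).
Proof.
move=> [S1 [SB _]] Sx Sy.
have S0 : S 0 by rewrite -(subrr 1); apply: (SB).
by rewrite -[y]opprK -[- y]sub0r; apply: (SB) => //; apply: (SB).
Qed.

Lemma submoduleB (M : lmodType R) (P : M -> Prop) x y :
  submodule P -> P x -> P y -> P (x - y).
Proof. by move=> [_ PD PZ] Px Py; apply: PD => //; rewrite -scaleN1r; apply: PZ. Qed.

End Closure.

(* The module structure on the set of cosets of [K] needs [hK], hence the unused
   argument. *)
Definition quot_lmod (R : nzRingType) (K : R -> Prop) (hK : left_ideal K) :=
  {X : R -> Prop | exists t, X = fun u => K (u - t)}.

HB.instance Definition _ R K hK := gen_eqMixin (@quot_lmod R K hK).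
HB.instance Definition _ R K hK := gen_choiceMixin (@quot_lmod R K hK).

Section QuotientModule.
Variables (R : nzRingType) (K : R -> Prop) (hK : left_ideal K).
Local Notation Q := (quot_lmod hK).

Definition coset (t : R) : Q := exist _ (fun u => K (u - t)) (ex_intro _ t erefl).
Definition coset_repr (X : Q) : R := projT1 (cid (proj2_sig X)).

Lemma coset_reprK X : coset (coset_repr X) = X.
Proof.
case: X => X pX; rewrite /coset_repr /=; case: (cid pX) => t e /=.
by apply: eq_exist; rewrite e.
Qed.

Lemma eq_coset s t : coset s = coset t <-> K (s - t).
Proof.
split=> [/(congr1 (fun X : Q => sval X s)) /= <-|kst].
  by rewrite subrr; apply: left_ideal0.
apply: eq_exist; apply: funext => u; apply: propext; split=> [kus|kut].
  by have := left_idealD hK kus kst; rewrite addrA subrK.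
by have := left_idealB hK kut kst; rewrite opprB addrA subrK.
Qed.

Lemma coset_ind (P : Q -> Prop) : (forall t, P (coset t)) -> forall X, P X.
Proof. by move=> Pc X; rewrite -(coset_reprK X). Qed.

Lemma coset_reprE t : K (coset_repr (coset t) - t).
Proof. by apply/eq_coset; rewrite coset_reprK. Qed.

Let qadd (X Y : Q) := coset (coset_repr X + coset_repr Y).
Let qopp (X : Q) := coset (- coset_repr X).
Let qscale (r : R) (X : Q) := coset (r * coset_repr X).

Let qaddE s t : qadd (coset s) (coset t) = coset (s + t).
Proof.
apply/eq_coset; have := left_idealD hK (coset_reprE s) (coset_reprE t).
by congr K; rewrite opprD !addrA; congr (_ - _); rewrite addrAC.
Qed.

Let qoppE s : qopp (coset s) = coset (- s).
Proof.
by apply/eq_coset; have := left_idealN hK (coset_reprE s); congr K; rewrite opprB opprK addrC.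
Qed.

Let qscaleE r s : qscale r (coset s) = coset (r * s).
Proof.
by apply/eq_coset; have := left_idealMl r hK (coset_reprE s); congr K; rewrite mulrBr.
Qed.

Let qaddA : associative qadd.
Proof. by elim/coset_ind => x; elim/coset_ind => y; elim/coset_ind => z; rewrite !qaddE addrA. Qed.
Let qaddC : commutative qadd.
Proof. by elim/coset_ind => x; elim/coset_ind => y; rewrite !qaddE addrC. Qed.
Let qadd0 : left_id (coset 0) qadd.
Proof. by elim/coset_ind => x; rewrite qaddE add0r. Qed.
Let qaddN : left_inverse (coset 0) qopp qadd.
Proof. by elim/coset_ind => x; rewrite qoppE qaddE addNr. Qed.

HB.instance Definition _ := GRing.isZmodule.Build Q qaddA qaddC qadd0 qaddN.

Lemma cosetD s t : coset s + coset t = coset (s + t). Proof. exact: qaddE. Qed.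

Let qscaleA a b v : qscale a (qscale b v) = qscale (a * b) v.
Proof. by elim/coset_ind: v => x; rewrite !qscaleE mulrA. Qed.
Let qscale1 : left_id 1 qscale.
Proof. by elim/coset_ind => x; rewrite qscaleE mul1r. Qed.
Let qscaleDr : right_distributive qscale +%R.
Proof.
by move=> a; elim/coset_ind => x; elim/coset_ind => y; rewrite cosetD !qscaleE cosetD mulrDr.
Qed.
Let qscaleDl v : {morph qscale^~ v : a b / a + b}.
Proof. by elim/coset_ind: v => x a b; rewrite /= !qscaleE cosetD mulrDl. Qed.

HB.instance Definition _ := GRing.Zmodule_isLmodule.Build R Q qscaleA qscale1 qscaleDr qscaleDl.

Lemma cosetZ r s : r *: coset s = coset (r * s). Proof. exact: qscaleE. Qed.

Lemma coset_eq0 s : coset s = 0 <-> K s.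
Proof. by rewrite -[0]/(coset 0) eq_coset subr0. Qed.

End QuotientModule.

Section SimpleModule.
Variables (R : nzRingType) (M : lmodType R).

Lemma submodule_cyclic (v : M) : submodule (fun z => exists r, z = r *: v).
Proof.
split; first by exists 0; rewrite scale0r.
  by move=> x y [r1 ->] [r2 ->]; exists (r1 + r2); rewrite scalerDl.
by move=> a x [r ->]; exists (a * r); rewrite scalerA.
Qed.

Lemma simple_generator (v : M) :
  simple_module M -> v <> 0 -> forall z, exists r, z = r *: v.
Proof.
move=> [_ simpleM] v0; case: (simpleM _ (submodule_cyclic v)) => [all0|//].
by case: v0; apply: all0; exists 1; rewrite scale1r.
Qed.

Lemma simple_moduleP (m : M) : m <> 0 ->
  (forall v z : M, v <> 0 -> exists r, z = r *: v) -> simple_module M.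
Proof.
move=> m0 gen; split=> [|P [_ _ PZ]]; first by exists m.
case: (pselect (exists v, P v /\ v <> 0)) => [[v [Pv v0]]|none].
  by right=> z; have [r ->] := gen v z v0; apply: PZ.
by left=> z Pz; apply: contrapT => z0; apply: none; exists z.
Qed.

End SimpleModule.

Section Idealizer.
Variables (R : nzRingType) (M : lmodType R) (m : M).

Definition ann_idealizer (x : R) := forall n, n *: m = 0 -> (n * x) *: m = 0.

Lemma ann_idealizer_ann n : n *: m = 0 -> ann_idealizer n.
Proof. by move=> nm n' n'm; rewrite -scalerA nm scaler0. Qed.

Lemma ann_idealizer_subring : is_subring ann_idealizer.
Proof.
split; first by move=> n; rewrite mulr1.
split=> x y Ix Iy n nm; first by rewrite mulrBr scalerBl Ix // Iy // subr0.
by rewrite mulrA; apply/Iy/Ix.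
Qed.

(* If [s] is not in the idealizer, some annihilator [n] gives [n s m <> 0], which
   generates [M]; writing [m = u n s m], every [t] splits as
   [(t - t u n s) + (t u n) s] with both [t - t u n s] and [t u n] annihilating [m]. *)
Lemma ann_idealizer_maximal s : simple_module M -> ~ ann_idealizer s ->
  maximal_subring ann_idealizer.
Proof.
move=> simpleM notIs; split; [exact: ann_idealizer_subring | by exists s|].
move=> S' subS' IS'.
case: (pselect (exists x, S' x /\ ~ ann_idealizer x)); last first.
  move=> none; left=> x; split=> [S'x|]; last exact: IS'.
  by apply: contrapT => notIx; apply: none; exists x.
move=> [s' [S's' notIs']]; right=> t.
have [n [nm nsm]] : exists n, n *: m = 0 /\ (n * s') *: m <> 0.
  apply: contrapT => all; apply: notIs' => n nm; apply: contrapT => nsm.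
  by apply: all; exists n.
have [u mE] := simple_generator simpleM nsm m.
have -> : t = (t - t * u * n * s') + (t * u * n) * s' by rewrite subrK.
apply: subringD => //; last first.
  by case: subS' => _ [_ S'M]; apply: S'M (S's'); apply/IS'/ann_idealizer_ann;
    rewrite -scalerA nm scaler0.
apply/IS'/ann_idealizer_ann.
by rewrite scalerBl -!mulrA -!scalerA (scalerA n) -mE subrr.
Qed.

Lemma ann_mulr_closed n t : ~ has_maximal_subring R -> simple_module M ->
  n *: m = 0 -> (n * t) *: m = 0.
Proof.
move=> nomax simpleM nm; apply: contrapT => ntm; apply: nomax.
by exists ann_idealizer; apply: (ann_idealizer_maximal (s := t)) => // It; apply/ntm/It.
Qed.

End Idealizer.

Definition baer_condition (R : nzRingType) (M : lmodType R) : Prop :=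
  forall (I : R -> Prop) (phi : R -> M), left_ideal I ->
    (forall x y, I x -> I y -> phi (x + y) = phi x + phi y) ->
    (forall r x, I x -> phi (r * x) = r *: phi x) ->
    exists m, forall x, I x -> phi x = x *: m.

Section BaerCriterion.
Variables (R : nzRingType) (M A B : lmodType R).
Variables (f : {linear A -> B}) (g : {linear A -> M}).
Hypothesis f_inj : injective f.

Definition partial_extension (p : (B -> Prop) * (B -> M)) :=
  [/\ submodule p.1, (forall a, p.1 (f a)), (forall a, p.2 (f a) = g a),
      (forall x y, p.1 x -> p.1 y -> p.2 (x + y) = p.2 x + p.2 y) &
      (forall r x, p.1 x -> p.2 (r *: x) = r *: p.2 x)].

Definition pext := {p | partial_extension p}.
Definition pdom (p : pext) := (sval p).1.
Definition pmap (p : pext) := (sval p).2.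

Definition pext_le (p q : pext) : bool :=
  `[< (forall x, pdom p x -> pdom q x) /\ (forall x, pdom p x -> pmap q x = pmap p x) >].

Lemma pext_le_refl : reflexive pext_le.
Proof. by move=> p; apply/asboolP. Qed.

Lemma pext_le_trans p q r : pext_le p q -> pext_le q r -> pext_le p r.
Proof.
move=> /asboolP [pq1 pq2] /asboolP [qr1 qr2]; apply/asboolP; split=> [x /pq1 /qr1 //|x px].
by rewrite qr2 ?pq2 //; apply: pq1.
Qed.

Section ImageExtension.

Let dom0 (x : B) := exists a, x = f a.
Let map0 (x : B) : M :=
  if pselect (dom0 x) is left e then g (sval (cid e)) else 0.

Let map0E a : map0 (f a) = g a.
Proof.
rewrite /map0; case: pselect => [e|[]]; last by exists a.
by case: cid => a' /= /f_inj ->.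
Qed.

Lemma partial_extension_image : partial_extension (dom0, map0).
Proof.
split=> /=.
- split; first by exists 0; rewrite linear0.
    by move=> x y [a ->] [b ->]; exists (a + b); rewrite linearD.
  by move=> r x [a ->]; exists (r *: a); rewrite linearZ.
- by move=> a; exists a.
- exact: map0E.
- by move=> x y [a ->] [b ->]; rewrite -linearD !map0E linearD.
- by move=> r x [a ->]; rewrite -linearZ !map0E linearZ.
Qed.

End ImageExtension.

Section ChainUnion.
Variables (C : set pext) (p0 : pext).
Hypotheses (C_total : total_on C pext_le) (Cp0 : C p0).

Let udom (x : B) := exists p, C p /\ pdom p x.
Let umap (x : B) : M :=
  if pselect (udom x) is left e then pmap (sval (cid e)) x else 0.

Let umapE p x : C p -> pdom p x -> umap x = pmap p x.
Proof.
move=> Cp px; rewrite /umap; case: pselect => [e|[]]; last by exists p.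
case: cid => q /= [Cq qx].
by case: (C_total Cp Cq) => /asboolP [_ ->].
Qed.

Let udom2 x y : udom x -> udom y -> exists p, [/\ C p, pdom p x & pdom p y].
Proof.
move=> [p [Cp px]] [q [Cq qy]].
by case: (C_total Cp Cq) => /asboolP [le _]; [exists q | exists p]; split=> //; apply: le.
Qed.

Let partial_extension_union : partial_extension (udom, umap).
Proof.
have ext (p : pext) : partial_extension (sval p) by case: p.
split=> /=.
- split.
  + by exists p0; split=> //; case: (ext p0) => [[]].
  + move=> x y /udom2 /[apply] [[p [Cp px py]]]; exists p; split=> //.
    by case: (ext p) => [[_ pD _]] _ _ _ _; apply: pD.
  + move=> r x [p [Cp px]]; exists p; split=> //.
    by case: (ext p) => [[_ _ pZ]] _ _ _ _; apply: pZ.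
- by move=> a; exists p0; split=> //; have [_ pf _ _ _] := ext p0; apply: pf.
- by move=> a; have [_ pf pg _ _] := ext p0; rewrite (@umapE p0) //; [apply: pg | apply: pf].
- move=> x y /udom2 /[apply] [[p [Cp px py]]]; have [[_ pD _] _ _ hD _] := ext p.
  by rewrite !(@umapE p) //; [apply: hD | apply: pD].
- move=> r x [p [Cp px]]; have [[_ _ pZ] _ _ _ hZ] := ext p.
  by rewrite !(@umapE p) //; [apply: hZ | apply: pZ].
Qed.

Lemma pext_nonempty_chain_ub : exists q, forall p, C p -> pext_le p q.
Proof.
exists (exist _ _ partial_extension_union) => p Cp.
by apply/asboolP; split=> [x px|x px]; [exists p | apply: umapE].
Qed.

End ChainUnion.

Lemma pext_chain_ub (C : set pext) : total_on C pext_le ->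
  exists q, forall p, C p -> pext_le p q.
Proof.
move=> C_total; case: (pselect (exists p, C p)) => [[p0 Cp0]|none].
  exact: pext_nonempty_chain_ub C_total Cp0.
by exists (exist _ _ partial_extension_image) => p Cp; case: none; exists p.
Qed.

Section OneStepExtension.
Variables (p : pext) (b : B) (m : M).
Hypothesis bm : forall r, pdom p (r *: b) -> pmap p (r *: b) = r *: m.

Let p_ext : partial_extension (sval p). Proof. by case: p. Qed.

Let dom1 (x : B) := exists cr : B * R, pdom p cr.1 /\ x = cr.1 + cr.2 *: b.
Let map1 (x : B) : M :=
  if pselect (dom1 x) is left e
  then pmap p (sval (cid e)).1 + (sval (cid e)).2 *: m else 0.

Let pmapB c c' : pdom p c -> pdom p c' -> pmap p (c' - c) = pmap p c' - pmap p c.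
Proof.
have [sub _ _ hD _] := p_ext => pc pc'.
have := hD _ _ (submoduleB sub pc' pc) pc.
by rewrite subrK /pmap => ->; rewrite addrK.
Qed.

(* The value on [c + r b] does not depend on the decomposition: two decompositions
   differ by [(r - r') b = c' - c], on which [pmap p] is already [(r - r') m]. *)
Let map1E c r : pdom p c -> map1 (c + r *: b) = pmap p c + r *: m.
Proof.
move=> pc; rewrite /map1; case: pselect => [e|[]]; last by exists (c, r).
case: cid => [[c' r']] /= [pc' e'].
have [sub _ _ _ _] := p_ext.
have eb : (r - r') *: b = c' - c.
  by rewrite scalerBl -[r *: b](addKr c) e' addrA addrK addrC.
have -> : pmap p c' = (r - r') *: m + pmap p c.
  by rewrite -bm eb ?pmapB ?subrK //; apply: submoduleB.
by rewrite scalerBl addrAC subrK addrC.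
Qed.

Let partial_extension_step : partial_extension (dom1, map1).
Proof.
have [[p0 pD pZ] pf pg hD hZ] := p_ext.
split=> /=.
- split.
  + by exists (0, 0); split=> //=; rewrite scale0r addr0.
  + move=> x y [[c r] /= [pc ->]] [[c2 r2] /= [pc2 ->]].
    by exists (c + c2, r + r2); split; [apply: pD | rewrite /= scalerDl addrACA].
  + move=> a x [[c r] /= [pc ->]]; exists (a *: c, a * r).
    by split; [apply: pZ | rewrite /= scalerDr scalerA].
- by move=> a; exists (f a, 0); split=> /=; [apply: pf | rewrite scale0r addr0].
- move=> a; rewrite -[f a]addr0 -(scale0r b) map1E; last exact: pf.
  by rewrite scale0r addr0; apply: pg.
- move=> x y [[c r] /= [pc ->]] [[c2 r2] /= [pc2 ->]].
  rewrite addrACA -scalerDl !map1E //; last exact: pD.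
  by rewrite /pmap hD // scalerDl addrACA.
- move=> a x [[c r] /= [pc ->]].
  rewrite scalerDr scalerA !map1E //; last exact: pZ.
  by rewrite /pmap hZ // scalerDr scalerA.
Qed.

Lemma pext_step : exists q, pext_le p q /\ pdom q b.
Proof.
exists (exist _ _ partial_extension_step); split; last first.
  by exists (0, 1); split=> /=; [case: p_ext => [[]] | rewrite scale1r add0r].
apply/asboolP; split=> x px; first by exists (x, 0); split=> //=; rewrite scale0r addr0.
by rewrite /pmap /= -{1}[x]addr0 -(scale0r b) map1E // scale0r addr0.
Qed.

End OneStepExtension.

Lemma baer_extension : baer_condition M ->
  exists h : {linear B -> M}, forall a, h (f a) = g a.
Proof.
move=> baerM.
have [p pmax] := ZL_preorder (exist _ _ partial_extension_image) pext_le_refl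
  pext_le_trans pext_chain_ub.
have [[p0 pD pZ] pf pg hD hZ] := svalP p.
have pdom_full b : pdom p b.
  apply: contrapT => notpb; pose I r := pdom p (r *: b).
  have hI : left_ideal I.
    split; [split=> [|x y Ix Iy] | move=> r x Ix]; rewrite /I.
    - by rewrite scale0r.
    - by rewrite scalerBl; apply: submoduleB.
    - by rewrite -scalerA; apply: pZ.
  have [m bm] : exists m, forall x, I x -> pmap p (x *: b) = x *: m.
    apply: (baerM I (fun r => pmap p (r *: b)) hI).
      by move=> x y Ix Iy; rewrite scalerDl /pmap hD.
    by move=> r x Ix; rewrite -scalerA /pmap hZ.
  have [q [pq qb]] := pext_step bm.
  by have /asboolP [qp _] := pmax q pq; apply/notpb/qp.
have lin a x y : pmap p (a *: x + y) = a *: pmap p x + pmap p y.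
  by rewrite /pmap hD ?hZ //; apply: pdom_full.
pose h : {linear B -> M} :=
  HB.pack (pmap p) (GRing.isLinear.Build R B M *:%R (pmap p) lin).
by exists h; apply: pg.
Qed.

End BaerCriterion.

Lemma baer_criterion (R : nzRingType) (M : lmodType R) :
  baer_condition M -> injective_module M.
Proof. by move=> baerM A B f g f_inj; apply: baer_extension. Qed.

Definition von_neumann_regular (R : nzRingType) := forall x : R, exists y, x = x * y * x.

Section SimpleBaer.
Variables (R : nzRingType) (M : lmodType R).
Hypotheses (R_regular : von_neumann_regular R) (simpleM : simple_module M).
Hypothesis ann_mulr : forall (m : M) n t, n *: m = 0 -> (n * t) *: m = 0.

Lemma ann_scale_eq0 (m : M) n : m <> 0 -> n *: m = 0 -> forall z : M, n *: z = 0.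
Proof.
by move=> m0 nm z; have [s ->] := simple_generator simpleM m0 z; rewrite scalerA ann_mulr.
Qed.

(* [phi] kills [I] inside the annihilator of [m]: [x = x y x] gives
   [phi x = (x y) phi x], and [x y] annihilates [m], hence all of [M]. Elsewhere,
   [m = s i m] for some [i] in [I], and [x - x s i] lies in that annihilator. *)
Lemma simple_baer_condition : baer_condition M.
Proof.
move=> I phi hI phiD phiM; have [m m0] := simpleM.1.
have phi0 x : I x -> x *: m = 0 -> phi x = 0.
  move=> Ix xm; have [y xE] := R_regular x.
  by rewrite xE phiM -?xE // (ann_scale_eq0 m0) // ann_mulr.
case: (pselect (exists i, I i /\ i *: m <> 0)); last first.
  move=> none; exists 0 => x Ix; rewrite scaler0; apply: phi0 => //.
  by apply: contrapT => xm; apply: none; exists x.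
move=> [i [Ii im]]; have [s mE] := simple_generator simpleM im m.
exists (phi (s * i)) => x Ix.
have Isi : I (s * i) by apply: left_idealMl.
have Ix1si : I (x * (1 - s * i)).
  by rewrite mulrBr mulr1; apply: left_idealB => //; apply: left_idealMl.
have x1sim : (x * (1 - s * i)) *: m = 0.
  by rewrite -scalerA scalerBl scale1r -scalerA -mE subrr scaler0.
have -> : x = x * (s * i) + x * (1 - s * i) by rewrite -mulrDr subrKC mulr1.
rewrite phiD //; last exact: left_idealMl.
by rewrite phiM // (phi0 _ Ix1si x1sim) addr0 -mulrDr subrKC mulr1.
Qed.

End SimpleBaer.

Definition strongly_regular (R : nzRingType) := forall a : R, exists s, a = s * (a * a).

Section StronglyRegular.
Variables (R : nzRingType) (R_sreg : strongly_regular R).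

Lemma sqr_eq0 (a : R) : a * a = 0 -> a = 0.
Proof. by move=> aa0; have [s ->] := R_sreg a; rewrite aa0 mulr0. Qed.

Lemma mulr_eq0C (x y : R) : x * y = 0 -> y * x = 0.
Proof. by move=> xy0; apply: sqr_eq0; rewrite mulrA -(mulrA y) xy0 mulr0 mul0r. Qed.

(* With [a = s a^2], [b := a - a s a] satisfies [b a = 0], hence [a b = 0] and [b b = 0]. *)
Lemma strongly_regular_regular : von_neumann_regular R.
Proof.
move=> a; have [s aE] := R_sreg a; exists s.
have ba : (a - a * s * a) * a = 0 by rewrite mulrBl -!mulrA -aE subrr.
have ab := mulr_eq0C ba.
have bb : (a - a * s * a) * (a - a * s * a) = 0.
  by rewrite mulrBl ab -(mulrA (a * s) a) ab mulr0 subrr.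
by apply/eqP; rewrite -subr_eq0; apply/eqP/sqr_eq0.
Qed.

Lemma idempotent_central (e t : R) : e * e = e -> e * t = t * e.
Proof.
move=> ee.
have etce : e * t * (1 - e) = 0.
  apply: sqr_eq0; rewrite -!mulrA (mulrA (1 - e) e) mulrBl mul1r ee subrr mul0r.
  by rewrite !mulr0.
have cete : (1 - e) * t * e = 0.
  apply: sqr_eq0; rewrite -!mulrA (mulrA e (1 - e)) mulrBr mulr1 ee subrr mul0r.
  by rewrite !mulr0.
move: etce cete; rewrite mulrBr mulr1 -mulrA mulrBl mul1r.
move=> /eqP; rewrite subr_eq0 => /eqP ->.
by move=> /eqP; rewrite subr_eq0 mulrA => /eqP.
Qed.

(* Writing [x = x y x], the idempotents [y x] and [x y] are central, which moves
   [r] across [x]: [x r = (x r y) x] and [r x = x (y r x)]. *)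
Lemma strongly_regular_duo : duo_ring R.
Proof.
split=> I [[I0 IB] IM].
- split; [by split | split; first by split].
  move=> r x Ix; have [y xE] := strongly_regular_regular x.
  have ee : (y * x) * (y * x) = y * x by rewrite -mulrA (mulrA x y x) -xE.
  rewrite xE -(mulrA x y x) -(mulrA x (y * x) r) (idempotent_central r ee) !mulrA.
  exact: IM.
- split; [split; first by split | by split].
  move=> r x Ix; have [y xE] := strongly_regular_regular x.
  have ee : (x * y) * (x * y) = x * y by rewrite mulrA -xE.
  rewrite xE (mulrA r (x * y) x) -(idempotent_central r ee) -!mulrA.
  exact: IM.
Qed.

End StronglyRegular.

Lemma regular_conv (R : nzRingType) : von_neumann_regular R -> von_neumann_regular R^c.
Proof. by move=> R_reg x; have [y xE] := R_reg x; exists y; rewrite [RHS]mulrA. Qed.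

Lemma has_maximal_subring_conv (R : nzRingType) :
  has_maximal_subring R^c -> has_maximal_subring R.
Proof.
have subring_conv (S : R -> Prop) : @is_subring R^c S <-> is_subring S.
  by split=> [[S1 [SB SM]]|[S1 [SB SM]]]; do 2!split=> //; move=> x y Sx Sy; apply: SM.
move=> [S [/subring_conv sS outS maxS]]; exists S; split=> // S' /subring_conv.
exact: maxS.
Qed.

Section MaximalAvoiding.
Variables (R : nzRingType) (a : R).

Definition maximal_avoiding (K : R -> Prop) :=
  [/\ left_ideal K, ~ K a &
      forall J, left_ideal J -> (forall x, K x -> J x) -> ~ J a -> forall x, J x -> K x].

Lemma exists_maximal_avoiding (L : R -> Prop) : left_ideal L -> ~ L a ->
  exists K, (forall x, L x -> K x) /\ maximal_avoiding K.
Proof.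
move=> hL notLa.
pose P (X : set R) := X = set0 \/ [/\ left_ideal X, (forall x, L x -> X x) & ~ X a].
have P_proper X x : P X -> X x -> [/\ left_ideal X, (forall x, L x -> X x) & ~ X a].
  by case=> [-> //|//].
have [K [PK Kmax]] : exists K, P K /\ forall X, (K `<` X)%classic -> ~ P X.
  apply: Zorn_bigcup => F FP F_total.
  case: (pselect (exists X x, F X /\ X x)) => [[X0 [x0 [FX0 X0x0]]]|none]; last first.
    left; apply/seteqP; split=> // x [X FX Xx].
    by case: none; exists X, x.
  have idF X x : F X -> X x -> left_ideal X by move=> FX /(P_proper _ _ (FP _ FX)) [].
  right; split.
  - split; [split|].
    + by exists X0 => //; apply: left_ideal0 (idF _ _ FX0 X0x0).
    + move=> x y [X FX Xx] [Y FY Yy].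
      case: (F_total _ _ FX FY) => [XY|YX].
        by exists Y => //; apply: left_idealB (idF _ _ FY Yy) _ Yy; apply: XY.
      by exists X => //; apply: left_idealB (idF _ _ FX Xx) Xx _; apply: YX.
    + by move=> r x [X FX Xx]; exists X => //; apply: left_idealMl (idF _ _ FX Xx) Xx.
  - move=> x Lx; exists X0 => //.
    by have [_ LX0 _] := P_proper _ _ (FP _ FX0) X0x0; apply: LX0.
  - by move=> [X FX Xa]; have [_ _] := P_proper _ _ (FP _ FX) Xa; apply.
have L0 : L 0 by apply: left_ideal0.
have [hK LK notKa] : [/\ left_ideal K, (forall x, L x -> K x) & ~ K a].
  case: PK => [K0|//]; case: (Kmax L); last by right.
  by rewrite K0; split=> // /(_ 0 L0).
exists K; split=> //; split=> // J hJ KJ notJa x Jx; apply: contrapT => notKx.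
by apply: (Kmax J); [split=> // /(_ x Jx) | right; split=> // y /LK /KJ].
Qed.

End MaximalAvoiding.

Section ColonQuotient.
Variables (R : nzRingType) (a : R) (K : R -> Prop) (hK : left_ideal K).

Definition colon (x : R) := K (x * a).

Lemma left_ideal_colon : left_ideal colon.
Proof.
split; [split|] => [|x y|r x]; rewrite /colon.
- by rewrite mul0r; apply: left_ideal0.
- by rewrite mulrBl; apply: left_idealB.
- by rewrite -mulrA; apply: left_idealMl.
Qed.

Local Notation Qa := (quot_lmod left_ideal_colon).
Local Notation Q := (quot_lmod hK).

(* [R/(K : a)] is isomorphic to [(K + R a)/K], whose submodules are the left ideals
   between [K] and [K + R a]; maximality of [K] leaves only the two trivial ones. *)
Lemma simple_quot_colon : maximal_avoiding a K -> simple_module Qa.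
Proof.
move=> [_ notKa Kmax].
apply: (@simple_moduleP _ _ (coset _ 1)) => [/coset_eq0|v z].
  by rewrite /colon mul1r.
elim/coset_ind: v => t /(contra_not (proj2 (coset_eq0 _ t))) notKta.
pose J x := exists ks : R * R, K ks.1 /\ x = ks.1 + ks.2 * (t * a).
have hJ : left_ideal J.
  split; [split|].
  - by exists (0, 0); rewrite /= mul0r addr0; split=> //; apply: left_ideal0.
  - move=> x y [[k1 s1] [/= Kk1 ->]] [[k2 s2] [/= Kk2 ->]].
    exists (k1 - k2, s1 - s2); split; first exact: left_idealB.
    by rewrite /= mulrBl opprD addrACA.
  - move=> r x [[k s] [/= Kk ->]]; exists (r * k, r * s).
    by split; [apply: left_idealMl | rewrite /= mulrDr mulrA].
have [[k s] [/= Kk aE]] : J a.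
  apply: contrapT => notJa; apply: notKta; apply: (Kmax J hJ) => //.
    by move=> x Kx; exists (x, 0); rewrite /= mul0r addr0.
  by exists (0, 1); rewrite /= mul1r add0r; split=> //; apply: left_ideal0.
have c1 : coset _ 1 = s *: coset left_ideal_colon t.
  by rewrite cosetZ; apply/eq_coset; rewrite /colon mulrBl mul1r {1}aE -mulrA addrK.
by elim/coset_ind: z => u; exists (u * s); rewrite -scalerA -c1 cosetZ mulr1.
Qed.

Let mula (X : Qa) : Q := coset hK (coset_repr X * a).

Let mulaE u : mula (coset left_ideal_colon u) = coset hK (u * a).
Proof. by apply/eq_coset; rewrite -mulrBl; apply: (coset_reprE left_ideal_colon). Qed.

Let mula_lin c X Y : mula (c *: X + Y) = c *: mula X + mula Y.
Proof.
elim/coset_ind: X => u; elim/coset_ind: Y => v.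
by rewrite cosetZ cosetD !mulaE cosetZ cosetD mulrDl mulrA.
Qed.

Definition mulr_colon : {linear Qa -> Q} :=
  HB.pack mula (GRing.isLinear.Build R Qa Q *:%R mula mula_lin).

Lemma mulr_colonE u : mulr_colon (coset left_ideal_colon u) = coset hK (u * a).
Proof. exact: mulaE. Qed.

Lemma mulr_colon_inj : injective mulr_colon.
Proof.
elim/coset_ind => u; elim/coset_ind => v; rewrite !mulr_colonE.
by move=> /eq_coset Kuva; apply/eq_coset; rewrite /colon mulrBl.
Qed.

End ColonQuotient.

(* The splitting [h] of [x |-> x a] gives [r] with [(a r - 1) a] in [K], and [a r a]
   is in [K] because [a], hence [a r], annihilates the coset of [1] in [R/(K : a)]. *)
Lemma left_V_strongly_regular (R : nzRingType) :
  left_V_ring R -> ~ has_maximal_subring R -> strongly_regular R.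
Proof.
move=> leftV nomax a; apply: contrapT => notRa2a.
pose L x := exists s, x = s * (a * a).
have hL : left_ideal L.
  split; [split|] => [|x y [s1 ->] [s2 ->]|r x [s ->]].
  - by exists 0; rewrite mul0r.
  - by exists (s1 - s2); rewrite mulrBl.
  - by exists (r * s); rewrite mulrA.
have notLa : ~ L a by move=> [s aE]; apply: notRa2a; exists s.
have [K [LK maxK]] := exists_maximal_avoiding hL notLa.
case: (maxK) => hK notKa _.
pose hKa := left_ideal_colon a hK.
have [h hE] := leftV _ (simple_quot_colon hK maxK) _ _ _ idfun (@mulr_colon_inj _ a _ hK).
pose r := coset_repr (h (coset hK 1)).
have hcoset u : h (coset hK u) = coset hKa (u * r).
  have -> : coset hK u = u *: coset hK 1 by rewrite cosetZ mulr1.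
  by rewrite linearZ /= -(coset_reprK (h (coset hK 1))) cosetZ.
have Karaa : K ((a * r - 1) * a).
  by have := hE (coset hKa 1); rewrite mulr_colonE mul1r hcoset /= => /eq_coset.
have Kara : K (a * r * a).
  have a_ann : a *: coset hKa 1 = 0.
    by rewrite cosetZ mulr1; apply/coset_eq0/LK; exists 1; rewrite mul1r.
  have := ann_mulr_closed r nomax (simple_quot_colon hK maxK) a_ann.
  by rewrite cosetZ mulr1 => /coset_eq0.
by apply: notKa; have := left_idealB hK Kara Karaa; rewrite mulrBl mul1r opprB addrC subrK.
Qed.

Theorem proposition2p8 (T : nzRingType) :
  left_V_ring T ->
  (has_maximal_subring T \/ duo_ring T) /\
  (~ has_maximal_subring T -> right_V_ring T).
Proof.
move=> leftV; case: (pselect (has_maximal_subring T)) => [hmax|nomax].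
  by split; [left | move=> /(_ hmax)].
have T_sreg := left_V_strongly_regular leftV nomax.
split; [by right; apply: strongly_regular_duo | move=> _ M simpleM].
apply/baer_criterion/simple_baer_condition => //.
  exact/regular_conv/strongly_regular_regular.
by move=> m n t; apply: ann_mulr_closed => // /has_maximal_subring_conv.
Qed.
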